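(* The function $g:2^V\to\mathbb{R}$, $g(A)=h(A)+\frac1L f(A)$, is non-decreasing and submodular.
   Context: $G=(V,E,w)$ is a finite simple undirected graph with positive rational edge weights and no isolated vertices. $N_A(v)=N(v)\cap A$, $W_A(v)=\sum_{u\in N_A(v)}w_{(v,u)}$, $W(v)=W_V(v)$. $h(A)=\sum_{v\in V}h_A(v)$ with $h_A(v)=W(v)/2$ if $v\in A$ or $W_A(v)\ge W(v)/2$, and $h_A(v)=W_A(v)$ otherwise. $f(A)=\sum_{v\in V}\delta_A(v)$ with $\delta_A(v)=1$ if $|N_A(v)|>0$ and $0$ otherwise. For $v$ with incident edge weights $w_1,\dots,w_d$, write $w_0=W(v)/2$ and each $w_i$ as a reduced fraction $p_i/q_i$; $l(v)=\mathrm{lcm}\{q_0,\dots,q_d\}$, $L=\max_v l(v)$. *)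

From mathcomp Require Import all_boot all_order all_algebra.
Set Implicit Arguments. Unset Strict Implicit. Unset Printing Implicit Defensive.
Import Order.TTheory GRing.Theory Num.Theory.
Local Open Scope ring_scope.

(* A weighted simple graph on a finite vertex type V: adjacency relation e
   (symmetric, irreflexive), rational weights w (only used on edges). *)
Section Defs.
Variables (V : finType) (e : rel V) (w : V -> V -> rat).

Definition nbA (A : {set V}) (v : V) : {set V} := [set u in A | e v u].

Definition WA (A : {set V}) (v : V) : rat := \sum_(u in nbA A v) w v u.

Definition Wt (v : V) : rat := WA [set: V] v.

Definition hA (A : {set V}) (v : V) : rat :=
  if (v \in A) || (Wt v / 2%:R <= WA A v) then Wt v / 2%:R else WA A v.

Definition h (A : {set V}) : rat := \sum_(v : V) hA A v.

Definition deltaA (A : {set V}) (v : V) : nat := (0 < #|nbA A v|)%N.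

Definition f (A : {set V}) : nat := (\sum_(v : V) deltaA A v)%N.

(* denominator of a rational in lowest terms (denq is normalized, > 0) *)
Definition den (q : rat) : nat := `|denq q|%N.

Definition lv (v : V) : nat :=
  lcmn (den (Wt v / 2%:R)) (\big[lcmn/1%N]_(u | e v u) den (w v u)).

Definition Lmax : nat := (\max_(v : V) lv v)%N.

Definition g (A : {set V}) : rat := h A + (f A)%:R / (Lmax%:R).

End Defs.

From mathcomp Require Import all_boot all_order all_algebra.
From mathcomp Require Import lra.
Set Implicit Arguments. Unset Strict Implicit. Unset Printing Implicit Defensive.
Import Order.TTheory GRing.Theory Num.Theory.
Local Open Scope ring_scope.

(* Both summands of [g] are sums over the vertices [v] of nondecreasing
   submodular set functions.  The term [h_A(v)] caps the modular and
   nondecreasing function [A |-> W_A(v)] at [W(v)/2], and the cap is reached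
   as soon as [v] enters [A]; such a capped modular function is submodular.
   The term [delta_A(v)] tests whether [A] meets the neighbourhood of [v],
   a coverage function.  Positive scaling by [1/L] preserves both properties,
   whatever the value of [L]. *)

Section SetFunctions.
Variables (T : finType) (R : realDomainType).
Implicit Types (A B : {set T}) (F G : {set T} -> R).

Definition nondecreasing_set F := forall A B, A \subset B -> F A <= F B.

Definition submodular F := forall A B, F (A :|: B) + F (A :&: B) <= F A + F B.

Definition modular F := forall A B, F (A :|: B) + F (A :&: B) = F A + F B.

Lemma nondecreasing_setD F G :
  nondecreasing_set F -> nondecreasing_set G -> nondecreasing_set (fun A => F A + G A).
Proof. by move=> monoF monoG A B sAB; apply: lerD; [apply: monoF | apply: monoG]. Qed.

Lemma submodularD F G :
  submodular F -> submodular G -> submodular (fun A => F A + G A).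
Proof.
by move=> subF subG A B; rewrite addrACA [leRHS]addrACA lerD.
Qed.

Lemma nondecreasing_setMr F c :
  0 <= c -> nondecreasing_set F -> nondecreasing_set (fun A => F A * c).
Proof. by move=> c_ge0 monoF A B sAB; rewrite ler_wpM2r ?monoF. Qed.

Lemma submodularMr F c : 0 <= c -> submodular F -> submodular (fun A => F A * c).
Proof. by move=> c_ge0 subF A B; rewrite -!mulrDl ler_wpM2r. Qed.

Lemma nondecreasing_set_sum (I : finType) (F_ : I -> {set T} -> R) :
  (forall i, nondecreasing_set (F_ i)) ->
  nondecreasing_set (fun A => \sum_i F_ i A).
Proof. by move=> monoF A B sAB; apply: ler_sum => i _; apply: monoF. Qed.

Lemma submodular_sum (I : finType) (F_ : I -> {set T} -> R) :
  (forall i, submodular (F_ i)) -> submodular (fun A => \sum_i F_ i A).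
Proof. by move=> subF A B; rewrite -!big_split; apply: ler_sum => i _; apply: subF. Qed.

Lemma modular_sum_in (c : T -> R) : modular (fun A => \sum_(u in A) c u).
Proof.
move=> A B.
rewrite [\sum_(u in A :|: B) _]big_mkcond [\sum_(u in A :&: B) _]big_mkcond.
rewrite [\sum_(u in A) _]big_mkcond [\sum_(u in B) _]big_mkcond -!big_split /=.
by apply: eq_bigr => u _; rewrite !inE; case: (u \in A); case: (u \in B);
  rewrite ?addr0 ?add0r.
Qed.

Lemma nondecreasing_set_sum_in (c : T -> R) :
  (forall u, 0 <= c u) -> nondecreasing_set (fun A => \sum_(u in A) c u).
Proof.
move=> c_ge0 A B /subsetP sAB.
rewrite [\sum_(u in A) _]big_mkcond [\sum_(u in B) _]big_mkcond /=.
by apply: ler_sum => u _; case: ifP => [/sAB -> //|_]; case: ifP.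
Qed.

Definition capped (p : bool) (c a : R) := if p || (c <= a) then c else a.

Lemma capped_le (p q : bool) c a b :
  (p -> q) -> a <= b -> capped p c a <= capped q c b.
Proof.
rewrite /capped => /implyP pq ab.
by case: (lerP c a) => ca; case: (lerP c b) => cb; case: p q pq => [] [] //= _;
  lra.
Qed.

Lemma capped_submod (p q : bool) c a b u i :
  u + i = a + b -> i <= a -> i <= b ->
  capped (p || q) c u + capped (p && q) c i <= capped p c a + capped q c b.
Proof.
rewrite /capped => uiE ia ib.
case: (lerP c a) => ca; case: (lerP c b) => cb;
  case: (lerP c u) => cu; case: (lerP c i) => ci;
  by case: p; case: q => /=; lra.
Qed.

Section Capped.
Variables (x : T) (c : R) (F : {set T} -> R).
Hypotheses (monoF : nondecreasing_set F) (modF : modular F).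

Lemma nondecreasing_set_capped :
  nondecreasing_set (fun A => capped (x \in A) c (F A)).
Proof. by move=> A B sAB; apply: capped_le; [apply: (subsetP sAB) | apply: monoF]. Qed.

Lemma submodular_capped : submodular (fun A => capped (x \in A) c (F A)).
Proof.
move=> A B; rewrite inE [x \in A :&: B]inE.
by apply: capped_submod; [apply: modF | apply: monoF; rewrite ?subsetIl ?subsetIr..].
Qed.

End Capped.

Definition meets (N A : {set T}) : R := (N :&: A != set0)%:R.

Lemma nondecreasing_set_meets N : nondecreasing_set (meets N).
Proof.
move=> A B sAB; rewrite /meets ler_nat.
case: (N :&: A =P set0) => [_ //| /eqP/set0Pn [u /(subsetP (setIS N sAB)) uNB]].
by rewrite lt0b; apply/set0Pn; exists u.
Qed.

Lemma submodular_meets N : submodular (meets N).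
Proof.
move=> A B; have monoN := nondecreasing_set_meets N.
move: (monoN _ _ (subsetIl A B)) (monoN _ _ (subsetIr A B)).
rewrite /meets -!natrD !ler_nat setIUr setU_eq0 negb_and.
by case: (N :&: A == set0); case: (N :&: B == set0); case: (N :&: (A :&: B) == set0).
Qed.

End SetFunctions.

Arguments meets {T R}.
Arguments nondecreasing_set_meets {T R}.
Arguments submodular_meets {T R}.

Section Graph.
Variables (V : finType) (e : rel V) (w : V -> V -> rat).
Hypothesis w_ge0 : forall u v, e u v -> 0 <= w u v.

Lemma WA_sum_in A v : WA e w A v = \sum_(u in A) (if e v u then w v u else 0).
Proof. by rewrite /WA -big_mkcondr; apply: eq_bigl => u; rewrite inE. Qed.

Lemma modular_WA v : modular (fun A => WA e w A v).
Proof. by move=> A B; rewrite !WA_sum_in modular_sum_in. Qed.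

Lemma nondecreasing_set_WA v : nondecreasing_set (fun A => WA e w A v).
Proof.
move=> A B sAB; rewrite !WA_sum_in; apply: nondecreasing_set_sum_in sAB => u.
by case: ifP => // /w_ge0.
Qed.

Lemma nondecreasing_set_h : nondecreasing_set (h e w).
Proof.
apply: nondecreasing_set_sum => v.
exact/nondecreasing_set_capped/nondecreasing_set_WA.
Qed.

Lemma submodular_h : submodular (h e w).
Proof.
apply: submodular_sum => v.
exact/submodular_capped/modular_WA/nondecreasing_set_WA.
Qed.

Lemma deltaA_meets A v : (deltaA e A v)%:R = meets [set u | e v u] A :> rat.
Proof.
rewrite /deltaA /meets card_gt0; congr (_ != _)%:R.
by apply/setP => u; rewrite !inE andbC.
Qed.

Lemma f_sum_meets A : (f e A)%:R = \sum_v meets [set u | e v u] A :> rat.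
Proof. by rewrite /f natr_sum; apply: eq_bigr => v _; rewrite deltaA_meets. Qed.

Lemma nondecreasing_set_f : nondecreasing_set (fun A => (f e A)%:R : rat).
Proof.
move=> A B sAB; rewrite !f_sum_meets.
exact: (nondecreasing_set_sum (fun v => nondecreasing_set_meets [set u | e v u])) sAB.
Qed.

Lemma submodular_f : submodular (fun A => (f e A)%:R : rat).
Proof.
move=> A B; rewrite !f_sum_meets.
exact: (submodular_sum (fun v => submodular_meets [set u | e v u])) A B.
Qed.

Lemma Lmax_inv_ge0 : 0 <= (Lmax e w)%:R^-1 :> rat.
Proof. by rewrite invr_ge0. Qed.

Lemma nondecreasing_set_g : nondecreasing_set (g e w).
Proof.
exact: nondecreasing_setD nondecreasing_set_h
  (nondecreasing_setMr Lmax_inv_ge0 nondecreasing_set_f).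
Qed.

Lemma submodular_g : submodular (g e w).
Proof. exact: submodularD submodular_h (submodularMr Lmax_inv_ge0 submodular_f). Qed.

End Graph.

Theorem mainTheorem15 (V : finType) (e : rel V) (w : V -> V -> rat)
  (e_irr : irreflexive e) (e_sym : symmetric e)
  (w_sym : forall u v, e u v -> w u v = w v u)
  (w_pos : forall u v, e u v -> 0 < w u v)
  (no_isolated : forall v : V, exists u, e v u) :
  (forall A B : {set V}, A \subset B -> g e w A <= g e w B) /\
  (forall A B : {set V}, g e w (A :|: B) + g e w (A :&: B) <= g e w A + g e w B).
Proof.
have w_ge0 u v : e u v -> 0 <= w u v by move/w_pos/ltW.
by split; [exact: nondecreasing_set_g w_ge0 | exact: submodular_g w_ge0].
Qed.
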